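(* Let $d\ge 1$ and let $p = x_1^{\alpha_1}\cdots x_d^{\alpha_d} - x_1^{\beta_1}\cdots x_d^{\beta_d}\in \overline{\mathbb{Q}}[x_1,\dots,x_d]$, with $\bm{\alpha}=(\alpha_1,\dots,\alpha_d),\bm{\beta}=(\beta_1,\dots,\beta_d)\in\mathbb{N}^d$, be an irreducible polynomial, and let $I=\langle p\rangle$. Let $L=\mathbb{Z}(\bm{\alpha}-\bm{\beta})\subseteq\mathbb{Z}^d$ and let $A=(a_{ij})\in\mathbb{Z}^{s\times d}$ ($s\ge1$) be an integer matrix with $\{\bm{u}\in\mathbb{Z}^d : A\bm{u}=\bm{0}\} = \operatorname{Sat}(L)$. Let $\pi_1,\dots,\pi_s$ be the first $s$ prime numbers and $\lambda_j=\prod_{i=1}^s \pi_i^{a_{ij}}$ for $j=1,\dots,d$. Then the invariant ideal of the linear loop with initial vector $(1,\dots,1)$ and update matrix $\operatorname{diag}(\lambda_1,\dots,\lambda_d)$ is exactly $I$.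
   Context: Throughout, $\mathbb{K}=\overline{\mathbb{Q}}$. A linear loop with initial vector $\bm{s}$ and update matrix $M$ (a $d\times d$ matrix) produces the orbit $\bm{x}(n)=M^n\bm{s}$, $n\ge 0$. A polynomial $P\in\mathbb{K}[x_1,\dots,x_d]$ is an invariant of the loop if $P(\bm{x}(n))=0$ for all $n\ge0$; the invariant ideal of the loop is the ideal of all its invariants. For a sublattice $L\subseteq\mathbb{Z}^d$, $\operatorname{Sat}(L)=\{\bm{u}\in\mathbb{Z}^d : c\bm{u}\in L \text{ for some } c\in\mathbb{Z}\setminus\{0\}\}$. (Such a matrix $A$ always exists; this loop is the output of the paper's synthesis procedure on input $I$.) *)

From HB Require Import structures.
From mathcomp Require Import all_boot all_order all_algebra all_field.
From mathcomp Require Import mpoly.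
Set Implicit Arguments. Unset Strict Implicit. Unset Printing Implicit Defensive.
Import Order.TTheory GRing.Theory Num.Theory.
Local Open Scope ring_scope.

(* K = \bar{Q} is modelled by algC (MathComp's algebraic closure of Q). *)

Definition next_prime (m : nat) : nat :=
  ex_minn (let: exist2 p Hp1 Hp2 := prime_above m in
           ex_intro (fun q => (m < q)%N && prime q) p (introT andP (conj Hp1 Hp2))).

(* nth_prime i = the (i+1)-th prime: nth_prime 0 = 2, nth_prime 1 = 3, ... *)
Fixpoint nth_prime (i : nat) : nat :=
  match i with
  | 0 => 2
  | i'.+1 => next_prime (nth_prime i')
  end.

Definition irreducible_elt (R : idomainType) (p : R) : Prop :=
  p != 0 /\ p \isn't a GRing.unit /\
  forall q r : R, p = q * r -> q \is a GRing.unit \/ r \is a GRing.unit.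

Definition loop_orbit (R : pzRingType) (d : nat) (M : 'M[R]_d) (s : 'cV[R]_d) (n : nat)
  : 'cV[R]_d := (M ^+ n) *m s.

Definition invariant_ideal (R : comNzRingType) (d : nat) (M : 'M[R]_d) (s : 'cV[R]_d)
  (P : {mpoly R[d]}) : Prop :=
  forall n : nat, P.@[fun i => loop_orbit M s n i ord0] = 0.

Definition principal_ideal (R : comNzRingType) (d : nat) (p P : {mpoly R[d]}) : Prop :=
  exists r : {mpoly R[d]}, P = r * p.

(* Sat(L) for the lattice L = Z v, vectors in Z^d as int column vectors *)
Definition in_lattice_span (d : nat) (v u : 'cV[int]_d) : Prop :=
  exists k : int, u = k *: v.

Definition in_Sat_span (d : nat) (v u : 'cV[int]_d) : Prop :=
  exists c : int, c != 0 /\ in_lattice_span v (c *: u).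

Definition exp_diff (d : nat) (alpha beta : 'X_{1..d}) : 'cV[int]_d :=
  \col_j ((alpha j)%:Z - (beta j)%:Z).

Definition lambda_of (s d : nat) (A : 'M[int]_(s, d)) (j : 'I_d) : algC :=
  \prod_(i < s) ((nth_prime i)%:R ^ (A i j)).

From HB Require Import structures.
From mathcomp Require Import all_boot all_order all_algebra all_field.
From mathcomp Require Import mpoly.
From mathcomp Require Import zify ring.
Import Order.TTheory GRing.Theory Num.Theory.
Local Open Scope ring_scope.
Set Implicit Arguments. Unset Strict Implicit. Unset Printing Implicit Defensive.

(* The orbit point at time n is (lambda_1^n, ..., lambda_d^n), so P is an invariant iff
   sum_m P_m (lambda^m)^n = 0 for all n.  Distinct geometric sequences are linearly
   independent, hence the coefficients of P sum to zero on every fibre of m |-> lambda^m,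
   i.e. P is a combination of binomials X^m - X^m' with lambda^m = lambda^m'.  By unique
   factorisation lambda^m = prod_i pi_i^(A m)_i, so these are the binomials with m - m' in
   ker A = Sat(L).  Irreducibility of p forces alpha and beta to have disjoint supports and
   coprime entries, so Sat(L) = L, and X^m - X^m' is a multiple of p when
   m - m' = k (alpha - beta).  Conversely lambda^alpha = lambda^beta, so p is an invariant. *)

Lemma next_primeP m : (m < next_prime m)%N && prime (next_prime m).
Proof. by rewrite /next_prime; case: ex_minnP. Qed.

Lemma nth_prime_prime i : prime (nth_prime i).
Proof. by case: i => [|i] //=; case/andP: (next_primeP (nth_prime i)). Qed.

Lemma nth_prime_inj : injective nth_prime.
Proof.
apply/incn_inj/leq_mono/(homo_ltn (@ltn_trans)) => i.
by case/andP: (next_primeP (nth_prime i)).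
Qed.

Lemma logn_prod (I : Type) p (r : seq I) (F : I -> nat) :
  (forall i, 0 < F i)%N -> logn p (\prod_(i <- r) F i) = (\sum_(i <- r) logn p (F i))%N.
Proof.
move=> F_gt0; elim: r => [|i r IHr]; first by rewrite !big_nil logn1.
by rewrite !big_cons lognM ?IHr ?prodn_gt0.
Qed.

Lemma logn_prod_nth_prime s (e : 'I_s -> nat) (k : 'I_s) :
  logn (nth_prime k) (\prod_(i < s) nth_prime i ^ e i) = e k.
Proof.
rewrite logn_prod => [|i]; last by rewrite expn_gt0 prime_gt0 ?nth_prime_prime.
rewrite (bigD1 k) //= big1 => [|i neq_ik]; rewrite lognX logn_prime ?nth_prime_prime //.
  by rewrite eqxx muln1 addn0.
by rewrite (inj_eq nth_prime_inj) (inj_eq val_inj) eq_sym (negbTE neq_ik) muln0.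
Qed.

Lemma prod_nth_prime_expn_inj s (e e' : 'I_s -> nat) :
  (\prod_(i < s) nth_prime i ^ e i = \prod_(i < s) nth_prime i ^ e' i)%N -> e =1 e'.
Proof. by move=> eq_e k; rewrite -logn_prod_nth_prime eq_e logn_prod_nth_prime. Qed.

Lemma nth_prime_neq0 (R : numDomainType) i : (nth_prime i)%:R != 0 :> R.
Proof. by rewrite pnatr_eq0 -lt0n prime_gt0 ?nth_prime_prime. Qed.

Lemma prod_nth_prime_expz_inj (R : numFieldType) s (z z' : 'I_s -> int) :
  \prod_(i < s) ((nth_prime i)%:R : R) ^ z i = \prod_(i < s) (nth_prime i)%:R ^ z' i ->
  z =1 z'.
Proof.
(* Shifting all exponents by K i reduces the claim to unique factorisation in nat. *)
pose K i := (`|z i| + `|z' i|)%N.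
have shift (w : 'I_s -> int) : (forall i, `|w i| <= K i)%N ->
    \prod_(i < s) ((nth_prime i)%:R : R) ^ w i * \prod_(i < s) (nth_prime i)%:R ^+ K i
    = (\prod_(i < s) nth_prime i ^ absz (w i + (K i)%:Z)%R)%N%:R.
  move=> le_wK; rewrite -big_split natr_prod; apply: eq_bigr => i _ /=.
  rewrite natrX exprnP -expfzDr ?nth_prime_neq0 // exprnP; congr (_ ^ _).
  by have := le_wK i; lia.
move=> eq_zz' i.
have /esym/eqP := shift z (fun j => leq_addr _ _).
rewrite eq_zz' shift => [|j]; last exact: leq_addl.
by rewrite eqr_nat => /eqP/prod_nth_prime_expn_inj/(_ i); rewrite /K; lia.
Qed.

Section Binomials.
Variables (R : idomainType) (d : nat).
Implicit Types (a b : 'X_{1..d}) (p q r : {mpoly R[d]}).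

Lemma msize_unit p : p \is a GRing.unit -> msize p = 1%N.
Proof.
case/andP=> /eqP pC unit_c; rewrite pC msizeC.
by case: eqP unit_c => // ->; rewrite unitr0.
Qed.

Lemma irreducible_elt_msize p q r :
  irreducible_elt p -> p = q * r -> msize q = 1%N \/ msize r = 1%N.
Proof. by case=> _ [_ irr_p] /irr_p[] /msize_unit; [left | right]. Qed.

Lemma msize_binomial a b :
  a != b -> msize ('X_[a] - 'X_[b] : {mpoly R[d]}) = (maxn (mdeg a) (mdeg b)).+1.
Proof.
move=> neq_ab; apply/eqP; rewrite eqn_leq -maxnSS geq_max.
rewrite (leq_trans (msizeD_le _ _)) ?msizeN ?msizeX //=.
rewrite !msize_mdeg_lt // mcoeff_msupp mcoeffB !mcoeffX eqxx.
  by rewrite (negbTE neq_ab) sub0r oppr_eq0 oner_eq0.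
by rewrite (eq_sym b) (negbTE neq_ab) subr0 oner_eq0.
Qed.

Lemma msize_binomial_gt1 a b : a != b -> (1 < msize ('X_[a] - 'X_[b] : {mpoly R[d]}))%N.
Proof.
move=> neq_ab; rewrite msize_binomial // ltnS lt0n; apply: contra neq_ab.
by rewrite -leqn0 geq_max !leqn0 !mdeg_eq0 => /andP[/eqP-> /eqP->].
Qed.

Variables (a b : 'X_{1..d}).
Hypothesis irr_ab : irreducible_elt ('X_[a] - 'X_[b] : {mpoly R[d]}).

Lemma binomial_irreducible_neq : a != b.
Proof. by case: irr_ab => nz_ab _; apply: contraNneq nz_ab => ->; rewrite subrr. Qed.

Lemma binomial_irreducible_disjoint j : a j = 0%N \/ b j = 0%N.
Proof.
case: (posnP (a j)) => [|a_gt0]; [by left | right; apply/eqP; rewrite -leqn0 leqNgt].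
apply/negP => b_gt0.
have le_Uj (c : 'X_{1..d}) : (0 < c j)%N -> (U_(j) <= c)%MM.
  by move=> c_gt0; apply/mnm_lepP => i; rewrite mnm1E; case: eqP => // <-.
have neq_ab' : (a - U_(j))%MM != (b - U_(j))%MM.
  apply: contraNneq binomial_irreducible_neq => eq_ab'.
  by rewrite -(submK (le_Uj _ a_gt0)) -(submK (le_Uj _ b_gt0)) eq_ab'.
have := @irreducible_elt_msize _ ('X_[U_(j)]) ('X_[a - U_(j)] - 'X_[b - U_(j)]) irr_ab.
rewrite mulrBr -!mpolyXD ![(U_(j) + _)%MM]addmC !submK ?le_Uj // msizeX mdeg1.
by case=> // /eqP; rewrite gtn_eqF ?msize_binomial_gt1.
Qed.

Lemma binomial_irreducible_coprime g : (forall j, g %| a j /\ g %| b j)%N -> g = 1%N.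
Proof.
move=> dvd_g; have [g_lt1 | g_gt1 | //] := ltngtP g 1.
  case/negP: binomial_irreducible_neq; apply/eqP/mnmP => j.
  by have [] := dvd_g j; rewrite (_ : g = 0%N) ?dvd0n; [move=> /eqP-> /eqP-> | lia].
pose a' := [multinom (a i %/ g)%N | i < d]; pose b' := [multinom (b i %/ g)%N | i < d].
have [ea eb] : a = (a' *+ g)%MM /\ b = (b' *+ g)%MM.
  by split; apply/mnmP => i; rewrite mulmnE mnmE divnK //; case: (dvd_g i).
have neq_ab' : a' != b'.
  by apply: contraNneq binomial_irreducible_neq => eq_ab'; rewrite ea eb eq_ab'.
pose r := \sum_(i < g) ('X_[a'] : {mpoly R[d]}) ^+ (g.-1 - i) * 'X_[b'] ^+ i.
have := @irreducible_elt_msize _ ('X_[a'] - 'X_[b']) r irr_ab.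
rewrite {1}ea {1}eb -!mpolyXn subrXX => /(_ erefl)[/eqP|].
  by rewrite gtn_eqF ?msize_binomial_gt1.
move=> /eqP/msize_poly1P[c nz_c r_c].
have := msize_binomial_gt1 neq_ab'.
have := congr1 (fun p => msize p) (esym (subrXX ('X_[a'] : {mpoly R[d]}) 'X_[b'] g)).
rewrite -/r r_c mulrC mul_mpolyC msizeZ // !mpolyXn -ea -eb.
rewrite !msize_binomial ?binomial_irreducible_neq // ea eb !mdegMn -maxnMl.
by move: (maxn _ _) => M; nia.
Qed.

End Binomials.

Lemma scale_eq_scale_gcd1 d (v u : 'cV[int]_d) (c k : int) :
  \big[gcdn/0%N]_(j < d) absz (v j ord0) = 1%N -> c != 0 -> c *: u = k *: v ->
  u = (k %/ c)%Z *: v.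
Proof.
move=> gcd_v1 nz_c eq_cu.
have entry j : c * u j 0 = k * v j 0.
  by have := congr1 (fun w : 'cV[int]_d => w j 0) eq_cu; rewrite !mxE.
have dvd_ck : (c %| k)%Z.
  rewrite dvdzE -[`|k|%N]muln1 -gcd_v1 (big_morph _ (muln_gcdr _) (muln0 _)).
  by apply/dvdn_biggcdP => j _; rewrite -abszM -entry abszM dvdn_mulr.
apply/matrixP => i j; rewrite (ord1 j) mxE; apply: (mulfI nz_c).
by rewrite entry -{1}(divzK dvd_ck); ring.
Qed.

Section ExpDiff.
Variables (R : idomainType) (d : nat) (a b : 'X_{1..d}).
Hypothesis irr_ab : irreducible_elt ('X_[a] - 'X_[b] : {mpoly R[d]}).

Lemma exp_diff_gcd1 : \big[gcdn/0%N]_(j < d) absz (exp_diff a b j ord0) = 1%N.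
Proof.
apply: (binomial_irreducible_coprime irr_ab) => j.
have : (\big[gcdn/0]_(i < d) `|exp_diff a b i ord0| %| `|exp_diff a b j ord0|)%N.
  exact: (biggcdn_inf j).
rewrite mxE.
case: (binomial_irreducible_disjoint irr_ab j) => ->.
  by rewrite sub0r abszN dvdn0.
by rewrite subr0 dvdn0.
Qed.

Lemma in_Sat_span_exp_diff u :
  in_Sat_span (exp_diff a b) u -> in_lattice_span (exp_diff a b) u.
Proof.
case=> c [nz_c [k eq_cu]]; exists (k %/ c)%Z.
exact: scale_eq_scale_gcd1 exp_diff_gcd1 nz_c eq_cu.
Qed.

End ExpDiff.

Lemma binomial_dvd_exp_diff (R : comNzRingType) d (a b m m' : 'X_{1..d}) (k : int) :
  (forall j, a j = 0 \/ b j = 0)%N -> exp_diff m m' = k *: exp_diff a b ->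
  principal_ideal ('X_[a] - 'X_[b]) ('X_[m] - 'X_[m'] : {mpoly R[d]}).
Proof.
move=> disj_ab; wlog k_ge0 : m m' k / 0 <= k => [nonneg eq_mm'|].
  have [k_ge0 | k_lt0] := lerP 0 k; first exact: nonneg k_ge0 eq_mm'.
  have [q eq_q] : principal_ideal ('X_[a] - 'X_[b]) ('X_[m'] - 'X_[m] : {mpoly R[d]}).
    apply: (nonneg _ _ (- k)); first by rewrite oppr_ge0 ltW.
    apply/matrixP => i j.
    by have := congr1 (fun w : 'cV[int]_d => w i j) eq_mm'; rewrite !mxE; lia.
  by exists (- q); rewrite mulNr -eq_q opprB.
case: k k_ge0 => // K _ eq_mm'.
have entry j : (m j)%:Z - (m' j)%:Z = K%:Z * ((a j)%:Z - (b j)%:Z).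
  by have := congr1 (fun w : 'cV[int]_d => w j 0) eq_mm'; rewrite !mxE.
(* No truncation happens in m i - K * a i, thanks to the disjoint supports. *)
pose m0 := [multinom (m i - K * a i)%N | i < d].
have [-> ->] : m = (m0 + a *+ K)%MM /\ m' = (m0 + b *+ K)%MM.
  split; apply/mnmP => i; rewrite mnmDE mnmE mulmnE.
    by have := entry i; have := disj_ab i; lia.
  by have := entry i; have := disj_ab i; lia.
exists ('X_[m0] * \sum_(i < K) 'X_[a] ^+ (K.-1 - i) * 'X_[b] ^+ i).
by rewrite !mpolyXD -!mpolyXn -mulrBr subrXX [_ * \sum_(i < K) _]mulrC mulrA.
Qed.

Lemma big_fibers (T U : eqType) (V : nmodType) (S : seq T) (f : T -> U) (G : T -> V) :
  \sum_(t <- S) G t = \sum_(y <- undup (map f S)) \sum_(t <- S | f t == y) G t.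
Proof.
rewrite (exchange_big_dep predT) //=; apply: eq_big_seq => t tS.
have ftS : f t \in undup (map f S) by rewrite mem_undup map_f.
have := undup_uniq (map f S).
rewrite (perm_uniq (perm_to_rem ftS)) /= => /andP[ftNrem _].
rewrite (big_rem (f t)) //= eqxx big1_seq ?addr0 // => y /andP[/eqP <-].
by rewrite (negbTE ftNrem).
Qed.

Lemma geometric_sums_eq0 (R : idomainType) (s : seq R) (F : R -> R) :
  uniq s -> (forall n, \sum_(x <- s) F x * x ^+ n = 0) -> {in s, forall x, F x = 0}.
Proof.
elim: s F => [//|a s IHs] F /= /andP[aNs uniq_s] sum0.
have Fs0 : {in s, forall x, F x = 0}.
  have Fsa0 : {in s, forall x, F x * (x - a) = 0}.
    apply: IHs => // n; transitivity
      (\sum_(x <- a :: s) F x * x ^+ n.+1 - a * \sum_(x <- a :: s) F x * x ^+ n).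
      rewrite !big_cons mulrDr big_distrr opprD addrACA -sumrB exprS mulrCA subrr add0r.
      by apply: eq_bigr => y _ /=; rewrite exprS; ring.
    by rewrite (sum0 n.+1) (sum0 n) mulr0 subr0.
  move=> x xs; have /eqP := Fsa0 x xs; rewrite mulf_eq0 subr_eq0.
  by case/orP=> [/eqP // | /eqP eq_xa]; rewrite -eq_xa xs in aNs.
move=> x; rewrite inE => /predU1P[-> | /Fs0 //].
have := sum0 0%N; rewrite big_cons expr0 mulr1 big_seq big1 ?addr0 // => y /Fs0 ->.
by rewrite mul0r.
Qed.

Lemma fiber_sums_eq0 (T : eqType) (R : idomainType) (S : seq T) (c f : T -> R) :
  (forall n, \sum_(t <- S) c t * f t ^+ n = 0) ->
  forall y, \sum_(t <- S | f t == y) c t = 0.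
Proof.
move=> sum0 y; have [yS | yNS] := boolP (y \in undup (map f S)); last first.
  rewrite big_seq_cond big_pred0 // => t; apply: contraNF yNS => /andP[tS /eqP <-].
  by rewrite mem_undup map_f.
move: y yS; apply: geometric_sums_eq0 (undup_uniq _) _ => n.
rewrite -[RHS](sum0 n) [RHS](big_fibers _ f); apply: eq_bigr => y _.
by rewrite mulr_suml; apply: eq_bigr => t /eqP ->.
Qed.

Lemma mevalX_pow (R : comNzRingType) d (x : 'I_d -> R) (m : 'X_{1..d}) n :
  ('X_[m] : {mpoly R[d]}).@[fun i => x i ^+ n] = 'X_[m].@[x] ^+ n.
Proof. by rewrite !mevalX -prodrXl; apply: eq_bigr => i _; rewrite exprAC. Qed.

Lemma meval_pow (R : comNzRingType) d (x : 'I_d -> R) (P : {mpoly R[d]}) n :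
  P.@[fun i => x i ^+ n] = \sum_(m <- msupp P) P@_m * 'X_[m].@[x] ^+ n.
Proof.
rewrite {1}(mpolyE P) raddf_sum; apply: eq_bigr => m _.
by rewrite /= mevalZ mevalX_pow.
Qed.

Lemma vanishing_on_powers_binomial_span (R : idomainType) d (x : 'I_d -> R)
    (P : {mpoly R[d]}) :
  (forall n, P.@[fun i => x i ^+ n] = 0) ->
  exists2 rep : 'X_{1..d} -> 'X_{1..d},
    {in msupp P, forall m, 'X_[rep m].@[x] = 'X_[m].@[x]} &
    P = \sum_(m <- msupp P) P@_m *: ('X_[m] - 'X_[rep m]).
Proof.
move=> P0; set S := msupp P; pose f (m : 'X_{1..d}) := ('X_[m] : {mpoly R[d]}).@[x].
pose r y := nth 0%MM S (find (fun m => f m == y) S).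
exists (r \o f) => [m mS | ].
  by apply/eqP/(nth_find 0%MM (a := fun m' => f m' == f m))/hasP; exists m.
have fibers0 y : \sum_(m <- S | f m == y) P@_m = 0.
  by apply: (fiber_sums_eq0 (c := fun m => P@_m)) => n; rewrite -meval_pow P0.
under eq_bigr do rewrite scalerBr.
rewrite sumrB -mpolyE (big_fibers _ f) big1_seq ?subr0 // => y _ /=.
rewrite (eq_bigr (fun m => P@_m *: 'X_[r y])) => [|m /eqP /= -> //].
by rewrite -scaler_suml fibers0 scale0r.
Qed.

Lemma loop_orbit_diag (R : pzRingType) d (lam : 'rV[R]_d) n i :
  loop_orbit (diag_mx lam) (const_mx 1) n i ord0 = lam 0 i ^+ n.
Proof.
elim: n => [|n IHn]; first by rewrite /loop_orbit expr0 mul1mx mxE.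
by rewrite /loop_orbit exprS -mulmxE -mulmxA mul_diag_mx mxE IHn exprS.
Qed.

Lemma invariant_ideal_diag (R : comNzRingType) d (x : 'I_d -> R) (P : {mpoly R[d]}) :
  invariant_ideal (diag_mx (\row_j x j)) (const_mx 1) P <->
  forall n, P.@[fun i => x i ^+ n] = 0.
Proof.
have orbitE n : P.@[fun i => loop_orbit (diag_mx (\row_j x j)) (const_mx 1) n i ord0]
               = P.@[fun i => x i ^+ n].
  by apply: meval_eq => i; rewrite loop_orbit_diag mxE.
by split=> P0 n; have := P0 n; rewrite orbitE.
Qed.

Lemma mevalX_lambda_of s d (A : 'M[int]_(s, d)) (m : 'X_{1..d}) :
  ('X_[m] : {mpoly algC[d]}).@[lambda_of A]
  = \prod_(i < s) (nth_prime i)%:R ^ (\sum_(j < d) A i j * (m j)%:Z).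
Proof.
rewrite mevalX /lambda_of; under eq_bigr => j _ do rewrite -prodrXl.
rewrite exchange_big /=; apply: eq_bigr => i _.
rewrite (big_morph _ (fun u v => expfzDr u v (nth_prime_neq0 _ i)) (expr0z _)).
by apply: eq_bigr => j _; rewrite exprnP exprz_exp.
Qed.

Lemma mevalX_lambda_of_eq s d (A : 'M[int]_(s, d)) (m m' : 'X_{1..d}) :
  ('X_[m] : {mpoly algC[d]}).@[lambda_of A] = 'X_[m'].@[lambda_of A] <->
  A *m exp_diff m m' = 0.
Proof.
have entry i : (A *m exp_diff m m') i 0
    = \sum_(j < d) A i j * (m j)%:Z - \sum_(j < d) A i j * (m' j)%:Z.
  by rewrite mxE -sumrB; apply: eq_bigr => j _; rewrite mxE mulrBr.
rewrite !mevalX_lambda_of; split => [/prod_nth_prime_expz_inj eq_exp | A_mm'].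
  by apply/matrixP => i j; rewrite (ord1 j) entry eq_exp subrr mxE.
apply: eq_bigr => i _; congr (_ ^ _); apply/eqP.
by rewrite -subr_eq0 -entry A_mm' mxE.
Qed.

Lemma principal_ideal_lincomb (R : comNzRingType) d (p : {mpoly R[d]}) (I : eqType)
    (S : seq I) (c : I -> R) (Q : I -> {mpoly R[d]}) :
  (forall i, i \in S -> principal_ideal p (Q i)) ->
  principal_ideal p (\sum_(i <- S) c i *: Q i).
Proof.
move=> pQ; rewrite big_seq; apply: (big_ind (principal_ideal p)).
- by exists 0; rewrite mul0r.
- by move=> _ _ [q1 ->] [q2 ->]; exists (q1 + q2); rewrite mulrDl.
- by move=> i /pQ[q ->]; exists (c i *: q); rewrite scalerAl.
Qed.

Theorem corollary1p3 (d s : nat) (alpha beta : 'X_{1..d}) (A : 'M[int]_(s, d)) :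
  (1 <= d)%N -> (1 <= s)%N ->
  irreducible_elt ('X_[alpha] - 'X_[beta] : {mpoly algC[d]}) ->
  (forall u : 'cV[int]_d, A *m u = 0 <-> in_Sat_span (exp_diff alpha beta) u) ->
  forall P : {mpoly algC[d]},
    invariant_ideal (diag_mx (\row_j lambda_of A j)) (const_mx 1) P <->
    principal_ideal ('X_[alpha] - 'X_[beta]) P.
Proof.
move=> _ _ irr_ab kerA P; rewrite invariant_ideal_diag.
have /mevalX_lambda_of_eq eq_ab : A *m exp_diff alpha beta = 0.
  by apply/kerA; exists 1; split; [exact: oner_neq0 | exists 1; rewrite !scale1r].
split => [/vanishing_on_powers_binomial_span[rep eq_rep ->] | [r ->] n].
  apply: principal_ideal_lincomb => m /eq_rep/esym/mevalX_lambda_of_eq/kerA.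
  move=> /(in_Sat_span_exp_diff irr_ab)[k eq_k].
  exact: binomial_dvd_exp_diff (binomial_irreducible_disjoint irr_ab) eq_k.
by rewrite mevalM mevalB !mevalX_pow eq_ab subrr mulr0.
Qed.
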